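(* For every language $L\subseteq\Sigma^+$: if $L\in\mathtt{incl}$-$\mathtt{ESO}$-$\mathtt{HORN}$, then $(\Sigma^+\setminus L)\in LinConj$.
   Context: Fix a finite alphabet $\Sigma$. A nonempty word $w=w_1\cdots w_n$ is represented by the structure $\langle w\rangle=([1,n];(Q_s)_{s\in\Sigma},\mathtt{min},\mathtt{max},\mathtt{suc},\mathtt{pred})$ with $Q_s(i)\iff w_i=s$, $\mathtt{min}(i)\iff i=1$, $\mathtt{max}(i)\iff i=n$, $\mathtt{suc}(i)=\min(i+1,n)$, $\mathtt{pred}(i)=\max(i-1,1)$. For an integer $a$, $x+a$ denotes $\mathtt{suc}^a(x)$ if $a\ge0$ and $\mathtt{pred}^{-a}(x)$ if $a<0$; $y-b=\mathtt{pred}^b(y)$. An inclusion Horn formula is $\Phi=\exists\mathbf{R}\forall x\forall y\,\psi(x,y)$, $\mathbf{R}$ a finite set of binary relation symbols, $\psi$ a conjunction of Horn clauses over $\{(Q_s)_{s\in\Sigma},\mathtt{min},\mathtt{max},\mathtt{suc},\mathtt{pred}\}\cup\mathbf{R}\cup\{=,\le,<\}$, each of the form $x\le y\wedge\delta_1\wedge\cdots\wedge\delta_r\to\delta_0$ with $\delta_0$ an atom $R(x,y)$ ($R\in\mathbf{R}$) or $\bot$, each $\delta_i$ one of: $U(x+a)$, $\neg U(x+a)$, $U(y+a)$, $\neg U(y+a)$ for $U\in\{(Q_s)_{s\in\Sigma},\mathtt{min},\mathtt{max}\}$, $a\in\mathbb Z$; $x=y$ or $x<y$; $S(x+a,y-b)\wedge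 x+a\le y-b$ with $S\in\mathbf{R}$, $a,b\ge0$. $\mathtt{incl}$-$\mathtt{ESO}$-$\mathtt{HORN}$ is the class of languages $\{w\in\Sigma^+:\langle w\rangle\models\Phi\}$. A linear conjunctive grammar is $G=(\Sigma,N,P,S)$ with nonterminals $N$, start symbol $S\in N$, and a finite set $P$ of rules $A\to\alpha_1\&\cdots\&\alpha_k$ ($k\ge1$), each $\alpha_i\in\Sigma^*\cup\Sigma^*N\Sigma^*$. The languages $(L(A))_{A\in N}$ form the least (componentwise) solution of $L(A)=\bigcup_{(A\to\alpha_1\&\cdots\&\alpha_k)\in P}\bigcap_iL(\alpha_i)$, where $L(uBv)=uL(B)v$, $L(u)=\{u\}$ for $u,v\in\Sigma^*$, $B\in N$; $L(G)=L(S)$. $LinConj$ is the class of languages generated by such grammars. *)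

From Stdlib Require List.
From mathcomp Require Import all_boot ssralg ssrint.
Set Implicit Arguments. Unset Strict Implicit. Unset Printing Implicit Defensive.

Section Defs.
Variable Sigma : finType.

Definition suc (n i : nat) : nat := minn i.+1 n.
Definition predp (i : nat) : nat := maxn i.-1 1.

Definition shift (n : nat) (i : nat) (a : int) : nat :=
  match a with
  | Posz m => iter m (suc n) i
  | Negz m => iter m.+1 predp i
  end.

Definition shiftm (i b : nat) : nat := iter b predp i.

Inductive upred := UQ of Sigma | UMin | UMax.

Definition upred_sem (w : seq Sigma) (U : upred) (p : nat) : bool :=
  match U with
  | UQ s => onth w p.-1 == Some s
  | UMin => p == 1
  | UMax => p == size w
  end.

Inductive var := VX | VY.

Inductive body_atom (k : nat) :=
| BU of bool & upred & var & int      (* U(v+a) if true, not U(v+a) if false *)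
| BEq
| BLt
| BRel of 'I_k & nat & nat.            (* S(x+a, y-b) /\ x+a <= y-b *)

Record clause (k : nat) := Clause {
  cl_body : seq (body_atom k);
  cl_head : option 'I_k   (* Some R : R(x,y);  None : bottom *)
}.

(* inclusion Horn formula  exists R forall x forall y psi *)
Record horn := Horn {
  nrel : nat;
  clauses : seq (clause nrel)
}.

Definition atom_sem (w : seq Sigma) (k : nat) (R : 'I_k -> nat -> nat -> Prop)
    (x y : nat) (d : body_atom k) : Prop :=
  let n := size w in
  match d with
  | BU b U v a =>
      let p := shift n (if v is VX then x else y) a in
      upred_sem w U p = b
  | BEq => x = y
  | BLt => x < y
  | BRel Sr a b =>
      R Sr (shift n x (Posz a)) (shiftm y b) /\ shift n x (Posz a) <= shiftm y b
  end.

Definition clause_sem (w : seq Sigma) (k : nat) (R : 'I_k -> nat -> nat -> Prop)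
    (c : clause k) : Prop :=
  forall x y : nat, 1 <= x <= size w -> 1 <= y <= size w ->
    x <= y ->
    foldr (fun d P => atom_sem w R x y d /\ P) True (cl_body c) ->
    match cl_head c with
    | Some Sr => R Sr x y
    | None => False
    end.

Definition models (w : seq Sigma) (Phi : horn) : Prop :=
  exists R : 'I_(nrel Phi) -> nat -> nat -> Prop,
    forall c, List.In c (clauses Phi) -> clause_sem w R c.

(* languages are predicates on Sigma^* ; Sigma^+ = nonempty words *)
Definition incl_ESO_HORN (L : seq Sigma -> Prop) : Prop :=
  exists Phi : horn, forall w, L w <-> (w <> [::] /\ models w Phi).

(* a conjunct alpha_i : either a terminal word u, or u B v *)
Definition conjunct (N : finType) : Type := (seq Sigma + (seq Sigma * N * seq Sigma))%type.

Record lcgrammar (N : finType) := LCGrammar {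
  rules : seq (N * seq (conjunct N))   (* A -> alpha_1 & ... & alpha_k *)
}.

Inductive derives (N : finType) (G : lcgrammar N) : N -> seq Sigma -> Prop :=
| derives_rule (A : N) (alphas : seq (conjunct N)) (w : seq Sigma) :
    List.In (A, alphas) (rules G) ->
    alphas <> [::] ->
    (forall u, List.In (inl u) alphas -> w = u) ->
    (forall u B v, List.In (inr (u, B, v)) alphas ->
       exists w', w = u ++ w' ++ v /\ derives G B w') ->
    derives G A w.

Definition LinConj (L : seq Sigma -> Prop) : Prop :=
  exists (N : finType) (G : lcgrammar N) (S : N),
    forall w, L w <-> derives G S w.

End Defs.

From mathcomp Require Import all_boot ssralg ssrint zify.
From Stdlib Require Import Classical ClassicalEpsilon.
Unset Printing Implicit Defensive.

(* If the Horn formula fails on w, then bottom is derivable at some x <= y in the least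
   fixpoint of its clauses, and every clause only looks at the letters within distance K of
   its two variables.  Hence whether a fact R(x,y), or bottom at (x,y), is derivable can be
   read off the window of w that extends [x,y] by K letters on each side (fewer at the ends
   of w): the fact survives every change of context that keeps the ends of the word where
   they are.  The nonterminals are the facts together with the shape of their window; the
   rule built from a clause and a window checks the first and last 2K+2 letters of the
   window literally and hands each relational atom to the nested window of its fact.  The
   grammar takes every sound conjunction of bounded size as a rule (selected classically),
   so that its derivations are sound for free, and completeness only needs the rules built
   from the clauses to be sound and of bounded size.  Frame nonterminals finally pad a
   window of bottom out to the whole word. *)

(** * Lists, slices and shifts *)

Lemma In_mem (T : eqType) (x : T) s : List.In x s <-> x \in s.
Proof.
elim: s => [|a s IH] //=; rewrite in_cons; split.
- by case=> [->|/IH ->]; rewrite ?eqxx ?orbT.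
- by case/orP=> [/eqP->|/IH]; [left|right].
Qed.

Lemma In_cat (T : Type) (x : T) s1 s2 : List.In x (s1 ++ s2) <-> List.In x s1 \/ List.In x s2.
Proof. exact: List.in_app_iff. Qed.

Lemma foldr_and_In (T : Type) (Q : T -> Prop) s :
  foldr (fun d P => Q d /\ P) True s <-> (forall d, List.In d s -> Q d).
Proof.
elim: s => [|a s IH] /=; first by split.
split.
- by case=> Ha /IH Hs d [<-|/Hs].
- by move=> H; split; [apply: H; left|apply/IH=> d Hd; apply: H; right].
Qed.

Lemma leq_foldr_maxn {T : Type} (f : T -> nat) {s d} :
  List.In d s -> f d <= foldr (fun e m => maxn (f e) m) 0 s.
Proof.
elim: s => [|e s IH] //= [->|/IH H]; first exact: leq_maxl.
exact: leq_trans H (leq_maxr _ _).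
Qed.

Fixpoint seqs_upto {T : Type} (n : nat) (C : seq T) : seq (seq T) :=
  if n is n'.+1 then
    [::] :: List.flat_map (fun c => List.map (cons c) (seqs_upto n' C)) C
  else [:: [::]].

Lemma In_seqs_upto (T : Type) n (C : seq T) l :
  size l <= n -> (forall c, List.In c l -> List.In c C) -> List.In l (seqs_upto n C).
Proof.
elim: n l => [|n IH] [|c l] //=; try by left.
move=> Hs Hin; right; apply/List.in_flat_map; exists c; split; first by apply: Hin; left.
by apply/List.in_map/IH => // d Hd; apply: Hin; right.
Qed.

Definition slice {T : Type} (w : seq T) a b := drop a (take b w).

Lemma size_slice (T : Type) (w : seq T) a b : size (slice w a b) = minn b (size w) - a.
Proof. by rewrite /slice size_drop size_take; case: ltnP; lia. Qed.

Lemma onth_drop (T : Type) (s : seq T) m k : onth (drop m s) k = onth s (m + k).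
Proof. by rewrite !onthE map_drop nth_drop. Qed.

Lemma onth_take (T : Type) (s : seq T) m k :
  onth (take m s) k = if k < m then onth s k else None.
Proof.
rewrite !onthE map_take; case: ifP => h; first by rewrite nth_take.
by rewrite nth_default // size_take; case: ltnP; lia.
Qed.

Lemma onth_cat3 (T : Type) (p v s : seq T) k :
  onth (p ++ v ++ s) (size p + k) = if k < size v then onth v k else onth s (k - size v).
Proof. by rewrite !onth_cat ltnNge leq_addr /= addKn. Qed.

Lemma slice_cat (T : Type) (w : seq T) a b c :
  a <= b <= c -> c <= size w -> slice w a b ++ slice w b c = slice w a c.
Proof.
move=> /andP[hab hbc] hc; apply: eq_from_onth => k.
rewrite /slice !onth_cat !onth_drop !onth_take !size_drop !size_take.
by repeat case: ifP; try lia; move=> *; try (f_equal; lia).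
Qed.

Lemma cat_take_slice_drop (T : Type) (w : seq T) a b : a <= b <= size w ->
  w = take a w ++ slice w a b ++ drop b w.
Proof.
move=> /andP[hab hb]; apply: eq_from_onth => k.
rewrite /slice !onth_cat !onth_drop !onth_take !size_drop !size_take.
by repeat case: ifP; try lia; move=> *; try (f_equal; lia).
Qed.

Lemma shift_Posz n x m : x <= n -> shift n x (Posz m) = minn (x + m) n.
Proof.
move=> h; elim: m => [|m IH]; first by rewrite /= addn0; lia.
by rewrite /shift iterS -/(shift n x (Posz m)) IH /suc; lia.
Qed.

Lemma shiftm_maxn x m : 0 < x -> shiftm x m = maxn (x - m) 1.
Proof.
move=> h; elim: m => [|m IH]; first by rewrite /= subn0; lia.
by rewrite /shiftm iterS -/(shiftm x m) IH /predp; lia.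
Qed.

Lemma shift_Negz n x m : 0 < x -> shift n x (Negz m) = maxn (x - m.+1) 1.
Proof. by move=> h; rewrite -shiftm_maxn. Qed.

Lemma shift_bounds n x a : 0 < x <= n ->
  0 < shift n x a <= n /\ x <= shift n x a + `|a|%N /\ shift n x a <= x + `|a|%N.
Proof. by case: a => m hx; [rewrite shift_Posz | rewrite shift_Negz]; lia. Qed.

Arguments shift : simpl never.

(** * Local agreement *)

(* The same letters within distance K, and the same ends of word within distance K+1: the
   atoms min and max at distance K look one step further. *)
Record local_agree {Sigma : finType} (K : nat) (w : seq Sigma) x (h : seq Sigma) x' :
    Prop := LocalAgree {
  agree_pos : 0 < x <= size w;
  agree_right : forall r, r <= K.+1 -> (x + r <= size w) = (x' + r <= size h);
  agree_left : forall r, r <= K.+1 -> (r < x) = (r < x');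
  agree_ahead : forall r, r <= K -> x + r <= size w -> onth w (x + r).-1 = onth h (x' + r).-1;
  agree_behind : forall r, r <= K -> r < x -> onth w (x - r).-1 = onth h (x' - r).-1
}.

Section LocalAgreement.
Context {Sigma : finType} {K : nat} {w h : seq Sigma} {x x' : nat}.
Implicit Type U : upred Sigma.
Hypothesis agree : local_agree K w x h x'.

Lemma agree_pos' : 0 < x' <= size h.
Proof.
case: agree => hx hr hl _ _; have := hr 0 isT; have := hl 0 isT; rewrite !addn0; lia.
Qed.

Lemma upred_agree_ahead e U : e <= K -> x + e <= size w ->
  upred_sem w U (x + e) = upred_sem h U (x' + e).
Proof.
case: agree => hx hr hl ha _ he hn; case: U => [s||] /=; first by rewrite ha.
- by have := hl 1 isT; have := hl 0 isT; lia.
- by have := hr e (leqW he); have := hr e.+1 he; lia.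
Qed.

Lemma upred_agree_behind e U : e <= K -> e < x ->
  upred_sem w U (x - e) = upred_sem h U (x' - e).
Proof.
case: agree => hx hr hl _ hb he hn; case: U => [s||] /=; first by rewrite hb.
- by have := hl e (leqW he); have := hl e.+1 he; lia.
- by have := hr 0 isT; have := hr 1 isT; have := hl e (leqW he); lia.
Qed.

Lemma shiftm_agree b : b <= K -> shiftm x b + x' = shiftm x' b + x.
Proof.
case: agree => hx _ hl _ _ hb; have hx' := agree_pos'.
rewrite !shiftm_maxn; try lia.
case: (ltnP b x) => hbx; first by have := hl b (leqW hb); lia.
by have := hl x.-1 ltac:(lia); have := hl x ltac:(lia); lia.
Qed.

Lemma shift_agree a : `|a|%N <= K -> shift (size w) x a + x' = shift (size h) x' a + x.
Proof.
case: a => m hm; last exact: (shiftm_agree _ hm).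
case: agree => hx hr _ _ _; have hx' := agree_pos'.
rewrite !shift_Posz; try lia.
case: (leqP (x + m) (size w)) => hxm; first by have := hr m (leqW hm); lia.
by have := hr (size w - x) ltac:(lia); have := hr (size w - x).+1 ltac:(lia); lia.
Qed.

Lemma upred_shift_agree a U : `|a|%N <= K ->
  upred_sem w U (shift (size w) x a) = upred_sem h U (shift (size h) x' a).
Proof.
move=> ha; have E := shift_agree a ha; case: (agree) => hx0 _ _ _ _.
have [hq [hqx hxq]] := shift_bounds _ _ a hx0.
move: E hq hqx hxq; set q := shift (size w) x a => E hq hqx hxq.
case: (leqP x q) => hx.
- rewrite (_ : q = x + (q - x)) 1?(_ : shift _ x' a = x' + (q - x)); try lia.
  by apply: upred_agree_ahead; lia.
- rewrite (_ : q = x - (x - q)) 1?(_ : shift _ x' a = x' - (x - q)); try lia.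
  by apply: upred_agree_behind; lia.
Qed.
End LocalAgreement.

(** * Aligned windows *)

Record similar {Sigma : finType} (M : nat) (v v' : seq Sigma) : Prop := Similar {
  similar_short : size v <= M -> v' = v;
  similar_long : M < size v -> M < size v';
  similar_prefix : forall t, t < M -> t < size v -> onth v' t = onth v t;
  similar_suffix : forall t, t < M -> t < size v ->
    onth v' (size v' - t.+1) = onth v (size v - t.+1)
}.

Record aligned {Sigma : finType} (K M : nat) (p v s p' v' s' : seq Sigma) (i j : nat) :
    Prop := Aligned {
  aligned_border : 2 * K + 2 <= M;
  aligned_pad : [/\ i <= K, j <= K & i + j < size v];
  aligned_left : (p == [::]) = (p' == [::]) /\ (p != [::] -> i = K);
  aligned_right : (s == [::]) = (s' == [::]) /\ (s != [::] -> j = K);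
  aligned_similar : similar M v v'
}.

Section Windows.
Context {Sigma : finType} {K M : nat} {p v s p' v' s' : seq Sigma} {i j : nat}.
Hypothesis al : aligned K M p v s p' v' s' i j.

Local Notation w := (p ++ v ++ s).
Local Notation h := (p' ++ v' ++ s').

Lemma aligned_sizes :
  [/\ 2 * K + 2 <= M /\ i <= K /\ j <= K /\ i + j < size v,
      size v <= M /\ size v' = size v \/ M < size v /\ M < size v',
      (size p == 0) = (size p' == 0) /\ (0 < size p -> i = K) &
      (size s == 0) = (size s' == 0) /\ (0 < size s -> j = K)].
Proof.
case: al => hM [hi hj hv] [hp hpK] [hs hsK] [hshort hlong _ _].
split; rewrite ?lt0n ?size_eq0 //.
by case: (leqP (size v) M) => hvM; [left; rewrite hshort | right; split => //; apply: hlong].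
Qed.

Lemma window_agree_left :
  local_agree K w (size p + i + 1) h (size p' + i + 1).
Proof.
have [hK hsz hp0 hs0] := aligned_sizes; case: al => _ _ _ _ [_ _ hpre _].
split; rewrite ?size_cat; try by move=> *; lia.
- move=> r hr hn.
  have -> : (size p + i + 1 + r).-1 = size p + (i + r) by lia.
  have -> : (size p' + i + 1 + r).-1 = size p' + (i + r) by lia.
  by rewrite !onth_cat3 !ifT ?hpre //; lia.
- move=> r hr hn.
  have -> : (size p + i + 1 - r).-1 = size p + (i - r) by lia.
  have -> : (size p' + i + 1 - r).-1 = size p' + (i - r) by lia.
  by rewrite !onth_cat3 !ifT ?hpre //; lia.
Qed.

Lemma window_agree_right :
  local_agree K w (size p + size v - j) h (size p' + size v' - j).
Proof.
have [hK hsz hp0 hs0] := aligned_sizes; case: al => _ _ _ _ [_ _ _ hsuf].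
split; rewrite ?size_cat; try by move=> *; lia.
- move=> r hr hn.
  have -> : (size p + size v - j + r).-1 = size p + (size v - (j - r).+1) by lia.
  have -> : (size p' + size v' - j + r).-1 = size p' + (size v' - (j - r).+1) by lia.
  by rewrite !onth_cat3 !ifT ?hsuf //; lia.
- move=> r hr hn.
  have -> : (size p + size v - j - r).-1 = size p + (size v - (j + r).+1) by lia.
  have -> : (size p' + size v' - j - r).-1 = size p' + (size v' - (j + r).+1) by lia.
  by rewrite !onth_cat3 !ifT ?hsuf //; lia.
Qed.

Lemma window_order :
  (size p + i + 1 == size p + size v - j) = (size p' + i + 1 == size p' + size v' - j) /\
  (size p + i + 1 < size p + size v - j) = (size p' + i + 1 < size p' + size v' - j).
Proof. by have [hK hsz _ _] := aligned_sizes; lia. Qed.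

End Windows.

(** * Derivations of linear conjunctive grammars *)

Section Derivations.
Context {Sigma : finType} {N : finType} (G : lcgrammar Sigma N).

Definition conjunct_holds (P : N -> seq Sigma -> Prop) (a : conjunct Sigma N) w : Prop :=
  match a with
  | inl u => w = u
  | inr (u, B, t) => exists2 w', w = u ++ w' ++ t & P B w'
  end.

Lemma derives_conjuncts A l w : List.In (A, l) (rules G) -> l <> [::] ->
  (forall a, List.In a l -> conjunct_holds (derives G) a w) -> derives G A w.
Proof.
move=> hin hne hl; apply: derives_rule hin hne _ _ => [u /hl // | u B t /hl [w' -> d]].
by exists w'.
Qed.

(* The recursive premises of [derives] sit under an existential, so Rocq's induction
   principle omits them. *)
Lemma derives_conjuncts_ind (P : N -> seq Sigma -> Prop) :
  (forall A l w, List.In (A, l) (rules G) ->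
     (forall a, List.In a l -> conjunct_holds P a w) -> P A w) ->
  forall A w, derives G A w -> P A w.
Proof.
move=> IH; fix self 3 => A w [{}A l {}w hin _ hterm hnt].
apply: (IH _ _ _ hin) => -[u | [[u B] t]] ha /=; first exact: hterm.
case: (hnt u B t ha) => w' [e d]; exists w'; [exact: e | exact: self _ _ d].
Qed.
End Derivations.

(** * The grammar of the words refuting a Horn formula *)

Section Construction.
Context {Sigma : finType}.
Variable Phi : horn Sigma.

Local Notation k := (nrel Phi).
Local Notation cls := (clauses Phi).
Local Notation rels := ('I_k -> nat -> nat -> Prop).
Implicit Types (w h : seq Sigma) (R : rels) (c : clause Sigma k) (d : body_atom Sigma k).

Definition body_holds w R x y c : Prop :=
  foldr (fun d P => atom_sem w R x y d /\ P) True (cl_body c).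

Definition closed_under w R : Prop :=
  forall c Sr x y, List.In c cls -> cl_head c = Some Sr ->
    0 < x -> x <= y -> y <= size w -> body_holds w R x y c -> R Sr x y.

Definition lfp w : rels := fun Sr x y => forall R, closed_under w R -> R Sr x y.

Definition holds w (o : option 'I_k) x y : Prop :=
  match o with
  | Some Sr => lfp w Sr x y
  | None => exists2 c, List.In c cls & cl_head c = None /\ body_holds w (lfp w) x y c
  end.

Definition bot_derivable w : Prop :=
  exists x y, [/\ 0 < x, x <= y, y <= size w & holds w None x y].

Lemma body_holds_mono w R R' x y c :
  (forall Sr a b, R Sr a b -> R' Sr a b) -> body_holds w R x y c -> body_holds w R' x y c.
Proof.
move=> hR /foldr_and_In hb; apply/foldr_and_In => d /hb.
by case: d => //= Sr a b [/hR].
Qed.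

Lemma lfp_closed w : closed_under w (lfp w).
Proof.
move=> c Sr x y hc hS hx hxy hy hb R HR; apply: (HR c Sr x y) => //.
by apply: body_holds_mono hb => Sr' a b; apply.
Qed.

Lemma models_bot_derivable w : models w Phi <-> ~ bot_derivable w.
Proof.
split.
- case=> R HR [x [y [hx hxy hy [c hc [hn hb]]]]].
  have closedR : closed_under w R.
    move=> c' Sr x' y' hc' hS hx' hxy' hy' hb'.
    by have := HR c' hc' x' y' _ _ hxy' hb'; rewrite hS; apply; lia.
  have := HR c hc x y; rewrite hn; apply; try lia.
  by apply: body_holds_mono hb => Sr a b; apply.
- move=> hnb; exists (lfp w) => c hc x y /andP[hx _] /andP[_ hy] hxy hb.
  case E: (cl_head c) => [Sr|]; first exact: lfp_closed hb.
  by apply: hnb; exists x, y; split => //; exists c.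
Qed.

Definition atom_bound d : nat :=
  match d with
  | BU _ _ _ a => `|a|%N
  | BRel _ a b => maxn a b
  | _ => 0
  end.

Definition clause_bound c : nat := foldr (fun d m => maxn (atom_bound d) m) 0 (cl_body c).

Definition horn_bound : nat := foldr (fun c m => maxn (clause_bound c) m) 0 cls.
Local Notation K := horn_bound.

Lemma atom_bound_le {c d} : List.In c cls -> List.In d (cl_body c) -> atom_bound d <= K.
Proof.
move=> hc hd.
exact: leq_trans (leq_foldr_maxn atom_bound hd) (leq_foldr_maxn clause_bound hc).
Qed.

Lemma body_transfer {w h x y x' y' R R' c} : List.In c cls ->
  local_agree K w x h x' -> local_agree K w y h y' ->
  (x == y) = (x' == y') -> (x < y) = (x' < y') ->
  (forall Sr a b, List.In (BRel Sigma Sr a b) (cl_body c) ->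
     shift (size w) x (Posz a) <= shiftm y b ->
     R' Sr (shift (size h) x' (Posz a)) (shiftm y' b) /\
     shift (size h) x' (Posz a) <= shiftm y' b) ->
  body_holds w R x y c -> body_holds h R' x' y' c.
Proof.
move=> hc hx hy heq hlt hrel /foldr_and_In hb; apply/foldr_and_In => d hd.
move: (hb d hd) (atom_bound_le hc hd); case: d hd => [b U [] a||| Sr a b] hd /= hsem hab.
- by rewrite -(upred_shift_agree hx _ _ hab).
- by rewrite -(upred_shift_agree hy _ _ hab).
- by move/eqP: hsem; rewrite heq => /eqP.
- by rewrite -hlt.
- by case: hsem => _ /(hrel _ _ _ hd).
Qed.

(* The positions of a window's fact lie within K of its ends, so what the clauses see around
   them lies in the first and last 2K+2 letters. *)
Definition border_len : nat := (2 * K).+2.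

Definition shape : finType := ('I_K.+1 * 'I_K.+1 * bool * bool)%type.
Definition nonterminal : finType := ((option 'I_k * shape) + (bool * bool) + unit)%type.
Definition window_nt o sh : nonterminal := inl (inl (o, sh)).
(* In [frame_nt cl cr], a false flag means that letters are still to come on that side. *)
Definition frame_nt cl cr : nonterminal := inl (inr (cl, cr)).
Definition any_nt : nonterminal := inr tt.

Definition window_lang (o : option 'I_k) (sh : shape) (v : seq Sigma) : Prop :=
  let: (i, j, bl, br) := sh in
  [/\ i + j < size v, ~~ bl -> i = K :> nat, ~~ br -> j = K :> nat &
      forall p s : seq Sigma, (p == [::]) = bl -> (s == [::]) = br ->
        holds (p ++ v ++ s) o (size p + i + 1) (size p + size v - j)].

Definition lang (A : nonterminal) (v : seq Sigma) : Prop :=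
  match A with
  | inl (inl (o, sh)) => window_lang o sh v
  | inl (inr (cl, cr)) => exists u v0 t (sh : shape),
      [/\ v = u ++ v0 ++ t, sh.1.2 = cl && (u == [::]), sh.2 = cr && (t == [::])
        & window_lang None sh v0]
  | inr _ => True
  end.

Definition sound_rule A (l : seq (conjunct Sigma nonterminal)) : Prop :=
  forall v, (forall a, List.In a l -> conjunct_holds lang a v) -> lang A v.

Definition short_words : seq (seq Sigma) := seqs_upto (2 * border_len) (enum Sigma).

Definition candidate_conjuncts : seq (conjunct Sigma nonterminal) :=
  List.map inl short_words ++
  List.flat_map (fun u => List.flat_map (fun B =>
    List.map (fun t => inr (u, B, t)) short_words) (enum nonterminal)) short_words.

Definition max_rule_len : nat := (foldr (fun c m => maxn (size (cl_body c)) m) 0 cls).+1.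

Definition is_sound_rule A l : bool :=
  if excluded_middle_informative (sound_rule A l /\ l <> [::]) then true else false.

Definition grammar : lcgrammar Sigma nonterminal := LCGrammar
  (List.flat_map (fun A => List.map (pair A)
     (List.filter (is_sound_rule A) (seqs_upto max_rule_len candidate_conjuncts)))
   (enum nonterminal)).

Lemma derives_lang A v : derives grammar A v -> lang A v.
Proof.
move: A v; apply: derives_conjuncts_ind => A l v.
case/List.in_flat_map => A' [_ /List.in_map_iff [l' [[<- <-] /List.filter_In [_]]]].
by rewrite /is_sound_rule; case: excluded_middle_informative => //= -[hsound _] _; apply: hsound.
Qed.

Lemma derives_sound_rule A l v : size l <= max_rule_len ->
  (forall a, List.In a l -> List.In a candidate_conjuncts) -> sound_rule A l -> l <> [::] ->
  (forall a, List.In a l -> conjunct_holds (derives grammar) a v) -> derives grammar A v.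
Proof.
move=> hsz hcand hsound hne hl; apply: derives_conjuncts hl => //.
apply/List.in_flat_map; exists A; split; first exact/In_mem/mem_enum.
apply/List.in_map/List.filter_In; split; first exact: In_seqs_upto.
by rewrite /is_sound_rule; case: excluded_middle_informative => //= -[].
Qed.

Lemma In_short_words u : size u <= 2 * border_len -> List.In u short_words.
Proof. by move=> hu; apply: In_seqs_upto => // a _; apply/In_mem/mem_enum. Qed.

Lemma In_candidate_inl u : size u <= 2 * border_len -> List.In (inl u) candidate_conjuncts.
Proof.
by move=> hu; rewrite /candidate_conjuncts In_cat; left; apply/List.in_map/In_short_words.
Qed.

Lemma In_candidate_inr u B t : size u <= 2 * border_len -> size t <= 2 * border_len ->
  List.In (inr (u, B, t)) candidate_conjuncts.
Proof.
move=> hu ht; rewrite /candidate_conjuncts In_cat; right.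
apply/List.in_flat_map; exists u; split; first exact: In_short_words.
apply/List.in_flat_map; exists B; split; first exact/In_mem/mem_enum.
exact/List.in_map/In_short_words.
Qed.

Lemma derives_single A a v : List.In a candidate_conjuncts ->
  (forall v', conjunct_holds lang a v' -> lang A v') ->
  conjunct_holds (derives grammar) a v -> derives grammar A v.
Proof.
move=> hcand hsound ha; apply: (@derives_sound_rule A [:: a]) => //.
- by move=> a' [<-|[]].
- by move=> v' /(_ a (or_introl erefl)) /hsound.
- by move=> a' [<-|[]].
Qed.

Lemma derives_any v : derives grammar any_nt v.
Proof.
elim: v => [|a v IH].
  by apply: (@derives_single _ (inl [::])) => //; apply: In_candidate_inl.
apply: (@derives_single _ (inr ([:: a], any_nt, [::]))) => //=; last by exists v; rewrite ?cats0.
exact: In_candidate_inr.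
Qed.

Lemma derives_frame_window (sh : shape) v :
  derives grammar (window_nt None sh) v -> derives grammar (frame_nt sh.1.2 sh.2) v.
Proof.
move=> d; apply: (@derives_single _ (inr ([::], window_nt None sh, [::]))) => /=.
- exact: In_candidate_inr.
- by move=> _ [v0 -> hv0]; exists [::], v0, [::], sh; rewrite !andbT cats0.
- by exists v; rewrite ?cats0.
Qed.

Lemma derives_frame_cons cl cr a v :
  derives grammar (frame_nt false cr) v -> derives grammar (frame_nt cl cr) (a :: v).
Proof.
move=> d; apply: (@derives_single _ (inr ([:: a], frame_nt false cr, [::]))) => /=.
- exact: In_candidate_inr.
- move=> _ [_ -> [u [v0 [t [sh [-> hl hr hv0]]]]]].
  by exists (a :: u), v0, t, sh; rewrite cats0 andbF.
- by exists v; rewrite ?cats0.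
Qed.

Lemma derives_frame_rcons cl cr a v :
  derives grammar (frame_nt cl false) v -> derives grammar (frame_nt cl cr) (rcons v a).
Proof.
move=> d; apply: (@derives_single _ (inr ([::], frame_nt cl false, [:: a]))) => /=.
- exact: In_candidate_inr.
- move=> _ [_ -> [u [v0 [t [sh [-> hl hr hv0]]]]]].
  exists u, v0, (rcons t a), sh; rewrite -!catA cats1; split => //.
  by rewrite hr -size_eq0 size_rcons andbF.
- by exists v; rewrite ?cats1.
Qed.

Lemma derives_frame_catl {cr u v} : u != [::] ->
  derives grammar (frame_nt false cr) v -> forall cl, derives grammar (frame_nt cl cr) (u ++ v).
Proof.
elim: u => [|a [|b u] IH] // _ d cl; first exact: derives_frame_cons.
by apply: derives_frame_cons; apply: IH.
Qed.

Lemma derives_frame_catr {cl v t} : t != [::] ->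
  derives grammar (frame_nt cl false) v -> forall cr, derives grammar (frame_nt cl cr) (v ++ t).
Proof.
elim/last_ind: t => [|t a IH] // _ d cr; rewrite -rcons_cat.
case: t IH => [|b t] IH; first by rewrite cats0; apply: derives_frame_rcons.
by apply: derives_frame_rcons; apply: IH.
Qed.

Definition wbeg x : nat := x.-1 - K.
Definition wend (w : seq Sigma) y : nat := minn (y + K) (size w).
Definition window (w : seq Sigma) x y : seq Sigma := slice w (wbeg x) (wend w y).
Definition shape_of (w : seq Sigma) x y : shape :=
  (inord (x.-1 - wbeg x), inord (wend w y - y), wbeg x == 0, wend w y == size w).

Lemma wbeg_le x : wbeg x <= x.-1.
Proof. exact: leq_subr. Qed.

Lemma wend_bounds {w y} : y <= size w -> y <= wend w y <= size w.
Proof. rewrite /wend; lia. Qed.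

Lemma leq_wbeg {x x1} : x <= x1 -> wbeg x <= wbeg x1.
Proof. rewrite /wbeg; lia. Qed.

Lemma leq_wend w {y1 y} : y1 <= y -> wend w y1 <= wend w y.
Proof. rewrite /wend; lia. Qed.

Lemma window_lang_shape_of o w x y v :
  window_lang o (shape_of w x y) v <->
  x.-1 - wbeg x + (wend w y - y) < size v /\
  forall p s : seq Sigma, (p == [::]) = (wbeg x == 0) -> (s == [::]) = (wend w y == size w) ->
    holds (p ++ v ++ s) o (size p + (x.-1 - wbeg x) + 1) (size p + size v - (wend w y - y)).
Proof.
rewrite /window_lang /shape_of /= !inordK ?ltnS /wbeg /wend; try lia.
by split=> [[] | []] // hsz hall; split=> //; lia.
Qed.

Lemma window_split {w x y} : 0 < x -> x <= y -> y <= size w ->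
  [/\ w = take (wbeg x) w ++ window w x y ++ drop (wend w y) w,
      size (take (wbeg x) w) = wbeg x, size (drop (wend w y) w) = size w - wend w y
    & size (window w x y) = wend w y - wbeg x].
Proof.
move=> hx hxy hy; rewrite size_take size_drop /window size_slice /wbeg /wend.
split; try lia; first by apply: cat_take_slice_drop; lia.
by case: ltnP; lia.
Qed.

Definition border_conjunct v : conjunct Sigma nonterminal :=
  if size v <= 2 * border_len then inl v
  else inr (take border_len v, any_nt, drop (size v - border_len) v).

Lemma In_border_conjunct v : List.In (border_conjunct v) candidate_conjuncts.
Proof.
rewrite /border_conjunct; case: leqP => hv; first exact: In_candidate_inl.
by apply: In_candidate_inr; rewrite ?size_take ?size_drop; try case: ifP; lia.
Qed.

Lemma derives_border_conjunct v : conjunct_holds (derives grammar) (border_conjunct v) v.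
Proof.
rewrite /border_conjunct; case: leqP => //= hv.
exists (slice v border_len (size v - border_len)); last exact: derives_any.
apply: cat_take_slice_drop; lia.
Qed.

Lemma border_conjunct_similar {v v'} :
  conjunct_holds lang (border_conjunct v) v' -> similar border_len v v'.
Proof.
rewrite /border_conjunct; case: leqP => /= hv; first by move=> ->; split.
move=> [z -> _]; have hM0 : 0 < border_len by [].
have hM : border_len < size v by lia.
have hsz : size (take border_len v ++ z ++ drop (size v - border_len) v) =
    border_len + size z + border_len.
  by rewrite !size_cat size_take size_drop hM; lia.
split; rewrite ?hsz; try lia.
- by move=> t ht _; rewrite onth_cat size_take hM ht onth_take ht.
- move=> t ht _; rewrite onth_cat size_take hM ifF; last lia.
  by rewrite onth_cat ifF ?onth_drop; [congr onth | ]; lia.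
Qed.

Definition subwindow_conjunct w x y (Sr : 'I_k) x1 y1 : conjunct Sigma nonterminal :=
  inr (slice w (wbeg x) (wbeg x1), window_nt (Some Sr) (shape_of w x1 y1),
       slice w (wend w y1) (wend w y)).

Definition atom_conjunct w x y (d : body_atom Sigma k) : conjunct Sigma nonterminal :=
  if d is BRel Sr a b then subwindow_conjunct w x y Sr (shift (size w) x (Posz a)) (shiftm y b)
  else border_conjunct (window w x y).

Definition clause_rule w (c : clause Sigma k) x y : seq (conjunct Sigma nonterminal) :=
  border_conjunct (window w x y) :: List.map (atom_conjunct w x y) (cl_body c).

Lemma subwindow_conjunct_sound {w x y x1 y1 Sr} {p' v' s' : seq Sigma} :
  0 < x -> x <= x1 -> x1 <= y1 -> y1 <= y -> y <= size w ->
  (p' == [::]) = (wbeg x == 0) -> (s' == [::]) = (wend w y == size w) ->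
  conjunct_holds lang (subwindow_conjunct w x y Sr x1 y1) v' ->
  exists x1' y1', [/\ x1' + x = x1 + (size p' + (x.-1 - wbeg x) + 1),
    y1' + y = y1 + (size p' + size v' - (wend w y - y)),
    x1' <= y1' & lfp (p' ++ v' ++ s') Sr x1' y1'].
Proof.
move=> hx hx1 hxy1 hy1 hy hp hs [vd Ev hvd].
set ud := slice w _ _ in Ev; set td := slice w _ _ in Ev.
have [hbx hbx1] := (wbeg_le x, wbeg_le x1).
have [hey hey1] := (wend_bounds hy, wend_bounds (leq_trans hy1 hy)).
have [hbb hee] := (leq_wbeg hx1, leq_wend w hy1).
have hud : size ud = wbeg x1 - wbeg x by rewrite size_slice; lia.
have htd : size td = wend w y - wend w y1 by rewrite size_slice; lia.
have hpu : (p' ++ ud == [::]) = (wbeg x1 == 0).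
  by move: hp; rewrite -!size_eq0 size_cat hud; lia.
have hts : (td ++ s' == [::]) = (wend w y1 == size w).
  by move: hs; rewrite -!size_eq0 size_cat htd; lia.
have /window_lang_shape_of[hsz /(_ _ _ hpu hts)] := hvd.
have -> : (p' ++ ud) ++ vd ++ td ++ s' = p' ++ v' ++ s' by rewrite Ev !catA.
rewrite size_cat hud => hl.
have hsv : size v' = wbeg x1 - wbeg x + size vd + (wend w y - wend w y1).
  by rewrite Ev !size_cat hud htd addnA.
exists (size p' + (wbeg x1 - wbeg x) + (x1.-1 - wbeg x1) + 1).
exists (size p' + (wbeg x1 - wbeg x) + size vd - (wend w y1 - y1)).
by rewrite hsv; split=> //; lia.
Qed.

Lemma window_aligned {w x y} {p' v' s' : seq Sigma} : 0 < x -> x <= y -> y <= size w ->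
  (p' == [::]) = (wbeg x == 0) -> (s' == [::]) = (wend w y == size w) ->
  similar border_len (window w x y) v' ->
  aligned K border_len (take (wbeg x) w) (window w x y) (drop (wend w y) w) p' v' s'
    (x.-1 - wbeg x) (wend w y - y).
Proof.
move=> hx hxy hy hp' hs' sim; have [_ hsp hss hsv] := window_split hx hxy hy.
have [hbx hey] := (wbeg_le x, wend_bounds hy).
split=> //; first by rewrite /border_len; lia.
- by rewrite hsv /wbeg /wend; split; lia.
- by rewrite hp' -size_eq0 hsp; split=> // /eqP; rewrite /wbeg; lia.
- by rewrite hs' -size_eq0 hss; split=> [|/eqP]; rewrite /wend in hey *; lia.
Qed.

Lemma clause_rule_sound w c x y R : List.In c cls -> 0 < x -> x <= y -> y <= size w ->
  body_holds w R x y c ->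
  sound_rule (window_nt (cl_head c) (shape_of w x y)) (clause_rule w c x y).
Proof.
move=> hc hx hxy hy hb v' hv'.
have sim := border_conjunct_similar (hv' _ (or_introl erefl)).
have [Ew hsp hss hsv] := window_split hx hxy hy.
have [hbx hey] := (wbeg_le x, wend_bounds hy).
have hp : (take (wbeg x) w == [::]) = (wbeg x == 0) by rewrite -size_eq0 hsp.
have hs : (drop (wend w y) w == [::]) = (wend w y == size w) by rewrite -size_eq0 hss; lia.
apply/window_lang_shape_of; split.
  by have [hpad hsz _ _] := aligned_sizes (window_aligned hx hxy hy hp hs sim); lia.
move=> p' s' hp' hs'; have al := window_aligned hx hxy hy hp' hs' sim.
move: Ew hsp hsv al; set p := take _ w; set v := window w x y; set s := drop _ w.
set i := x.-1 - wbeg x; set j := wend w y - y => Ew hsp hsv al.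
have Ex : x = size p + i + 1 by rewrite hsp /i; lia.
have Ey : y = size p + size v - j by rewrite hsp hsv /j; lia.
have agx := window_agree_left al; rewrite -Ew -Ex in agx.
have agy := window_agree_right al; rewrite -Ew -Ey in agy.
have [heq hlt] := window_order al; rewrite -Ex -Ey in heq hlt.
set h := p' ++ v' ++ s' in agx agy *.
have hb' : body_holds h (lfp h) (size p' + i + 1) (size p' + size v' - j) c.
  apply: (body_transfer hc agx agy heq hlt _ hb) => Sr a b hd hle.
  have hrel := hv' _ (or_intror (List.in_map (atom_conjunct w x y) _ _ hd)).
  have := atom_bound_le hc hd; rewrite /= geq_max => /andP[ha hb0].
  have hxa : x <= shift (size w) x (Posz a) by rewrite shift_Posz; lia.
  have hby : shiftm y b <= y by rewrite shiftm_maxn; lia.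
  have [x1' [y1' [ex ey hxy1 hl]]] := subwindow_conjunct_sound hx hxa hle hby hy hp' hs' hrel.
  have tx := shift_agree agx (Posz a) ha; have ty := shiftm_agree agy b hb0.
  rewrite -/i -/j in ex ey.
  have /= e1 : shift (size h) (size p' + i + 1) (Posz a) = x1' by lia.
  have e2 : shiftm (size p' + size v' - j) b = y1' by lia.
  by rewrite e1 e2.
have [/andP[hx' _] /andP[_ hy']] := (agree_pos' agx, agree_pos' agy).
case E: (cl_head c) => [Sr|] /=; last by exists c.
by apply: lfp_closed hc E _ _ _ hb'; lia.
Qed.

Lemma In_clause_rule w c x y a : List.In c cls -> 0 < x -> x <= y -> y <= size w ->
  List.In a (clause_rule w c x y) -> List.In a candidate_conjuncts.
Proof.
move=> hc hx hxy hy [<- | /List.in_map_iff [d [<- hd]]]; first exact: In_border_conjunct.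
case: d hd => [? ? ? ? | | | Sr a' b] hd; try exact: In_border_conjunct.
have := atom_bound_le hc hd; rewrite /= geq_max => /andP[ha hb].
apply: In_candidate_inr; rewrite size_slice ?shift_Posz ?shiftm_maxn /border_len /wbeg /wend; lia.
Qed.

Definition derivable_window w : rels := fun Sr x y =>
  0 < x -> x <= y -> y <= size w ->
  derives grammar (window_nt (Some Sr) (shape_of w x y)) (window w x y).

Lemma derives_clause_window {w c x y} : List.In c cls -> 0 < x -> x <= y -> y <= size w ->
  body_holds w (derivable_window w) x y c ->
  derives grammar (window_nt (cl_head c) (shape_of w x y)) (window w x y).
Proof.
move=> hc hx hxy hy hb; apply: (@derives_sound_rule _ (clause_rule w c x y)) => //.
- by rewrite /= size_map ltnS; exact: (leq_foldr_maxn (fun c => size (cl_body c)) hc).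
- by move=> a; apply: In_clause_rule.
- exact: clause_rule_sound hb.
move=> _ [<- | /List.in_map_iff [d [<- hd]]]; first exact: derives_border_conjunct.
case: d hd => [? ? ? ? | | | Sr a b] hd; try exact: derives_border_conjunct.
have [hR hle] := (foldr_and_In _ _ _).1 hb _ hd.
have hxa : x <= shift (size w) x (Posz a) by rewrite shift_Posz; lia.
have hby : shiftm y b <= y by rewrite shiftm_maxn; lia.
exists (window w (shift (size w) x (Posz a)) (shiftm y b)); last by apply: hR; lia.
have [hb1 hb2] := (leq_wbeg hxa, wbeg_le (shift (size w) x (Posz a))).
have [[he1 he2] he3] := (leq_wend w hby, wend_bounds (leq_trans hby hy), wend_bounds hy).
by rewrite /window !slice_cat //; lia.
Qed.

Lemma derivable_window_closed w : closed_under w (derivable_window w).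
Proof.
move=> c Sr x y hc hS hx hxy hy hb _ _ _.
by have := derives_clause_window hc hx hxy hy hb; rewrite hS.
Qed.

Lemma bot_derivable_derives w : bot_derivable w -> derives grammar (frame_nt true true) w.
Proof.
case=> x [y [hx hxy hy [c hc [hn hb]]]].
have hw : body_holds w (derivable_window w) x y c.
  by apply: body_holds_mono hb => Sr a b /(_ _ (derivable_window_closed w)).
have := derives_clause_window hc hx hxy hy hw; rewrite hn => /derives_frame_window /= d.
have [Ew hsp hss _] := window_split hx hxy hy; rewrite {1}Ew.
move: hsp hss d; set p := take _ w; set v := window w x y; set s := drop _ w => hsp hss.
have [hbx hey] := (wbeg_le x, wend_bounds hy).
case: (wend w y =P size w) => [he | /eqP hne] d.
  have -> : s = [::] by apply/size0nil; rewrite hss he subnn.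
  rewrite cats0; case: (wbeg x =P 0) d => [hb0 | /eqP hb0] d.
    by have -> : p = [::] by apply/size0nil; rewrite hsp hb0.
  by apply: (derives_frame_catl _ d); rewrite -size_eq0 hsp.
have {}d : derives grammar (frame_nt (wbeg x == 0) true) (v ++ s).
  by apply: (derives_frame_catr _ d); rewrite -size_eq0 hss; lia.
case: (wbeg x =P 0) d => [hb0 | /eqP hb0] d.
  by have -> : p = [::] by apply/size0nil; rewrite hsp hb0.
by apply: (derives_frame_catl _ d); rewrite -size_eq0 hsp.
Qed.

Lemma derives_bot_derivable w :
  derives grammar (frame_nt true true) w -> bot_derivable w /\ w <> [::].
Proof.
move/derives_lang => [u [v [t [[[[i j] bl] br] [-> /= hbl hbr [hsz _ _ hall]]]]]].
have [c hc [hn hb]] := hall u t (esym hbl) (esym hbr); split.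
  exists (size u + i + 1), (size u + size v - j).
  by rewrite !size_cat; split; try lia; exists c.
by move=> /(congr1 size); rewrite !size_cat /=; lia.
Qed.
End Construction.

Theorem lemma7 (Sigma : finType) (L : seq Sigma -> Prop) :
  (forall w, L w -> w <> [::]) ->
  incl_ESO_HORN L ->
  LinConj (fun w : seq Sigma => w <> [::] /\ ~ L w).
Proof.
(* The first hypothesis already follows from [incl_ESO_HORN L]. *)
move=> _ [Phi HPhi].
exists (nonterminal Phi), (grammar Phi), (frame_nt Phi true true) => w; split.
- case=> hw hnL; apply: bot_derivable_derives.
  by apply: NNPP => hnb; apply/hnL/HPhi; split=> //; apply/models_bot_derivable.
- by case/derives_bot_derivable => hb hw; split=> // /HPhi [_ /models_bot_derivable].
Qed.
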